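(* Let $\Omega$ be a Polish space admitting a nonzero atomless finite positive Borel measure (e.g. $\Omega=\mathbb{R}$). Then $\mathscr{L}(\mathscr{M}(\Omega),\sigma)$ is not an ideal of $\mathscr{L}(\mathscr{M}(\Omega))$: for every positive measure $\mu\ne0$ there is an operator $T\in\mathscr{L}(\mathscr{M}(\Omega))$ with $0\le T\le \mathbb{1}\otimes\mu$ (where $(\mathbb{1}\otimes\mu)\nu=\nu(\Omega)\mu$ is weakly continuous) such that $T$ is not weakly continuous.
   Context: $\mathscr{M}(\Omega)$ is the Banach lattice of finite signed Borel measures; $\mathscr{L}(\mathscr{M}(\Omega))$ the bounded operators on it with the order $S\le T$ iff $S\mu\le T\mu$ for positive $\mu$. An operator is weakly continuous if $(T\nu)(A)=\int k(x,A)\,d\nu(x)$ for a bounded transition kernel $k$ (a map $\Omega\times\mathscr{B}(\Omega)\to\mathbb{R}$, signed measure in the second variable, measurable in the first, with $\sup_x\lvert k\rvert(x,\Omega)<\infty$); equivalently, its norm adjoint leaves the space $B_b(\Omega)$ of bounded Borel functions invariant. $\mathscr{L}(\mathscr{M}(\Omega),\sigma)$ is the space of weakly continuous operators. *)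

From HB Require Import structures.
From mathcomp Require Import all_boot all_order all_algebra.
From mathcomp Require Import all_classical all_reals all_analysis.
Set Implicit Arguments. Unset Strict Implicit. Unset Printing Implicit Defensive.
Import Order.TTheory GRing.Theory Num.Theory.
Import numFieldNormedType.Exports.
Local Open Scope classical_set_scope.
Local Open Scope ring_scope.

Definition polish (R : realType) (X : topologicalType) : Prop :=
  (exists D : set X, countable D /\ closure D = setT) /\
  exists dist : X -> X -> R,
    (forall x y, 0 <= dist x y) /\
    (forall x y, dist x y = 0 <-> x = y) /\
    (forall x y, dist x y = dist y x) /\
    (forall x y z, dist x z <= dist x y + dist y z) /\
    (forall A : set X, open A <->
        (forall x, A x -> exists2 e : R, 0 < e & [set y | dist x y < e] `<=` A)) /\
    (forall u : nat -> X,
        (forall e : R, 0 < e -> exists N : nat, forall m n : nat,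
            (N <= m)%N -> (N <= n)%N -> dist (u m) (u n) < e) ->
        exists x : X, (fun n => dist (u n) x) @ \oo --> 0).

Definition Borel (X : ptopologicalType) := g_sigma_algebraType (@open X).

Section SignedMeasures.
Context {d : measure_display} {T : measurableType d} {R : realType}.

(** Finite signed (real-valued, countably additive) measures on T.
    Convention: a signed measure is represented by a function on all sets
    that vanishes on non-measurable sets. *)
Definition smeasure (m : set T -> R) : Prop :=
  (forall A, ~ measurable A -> m A = 0) /\
  (forall F : (set T)^nat, (forall n, measurable (F n)) -> trivIset setT F ->
     (fun n => \sum_(0 <= i < n) m (F i)) @ \oo --> m (\bigcup_n F n)).

Definition spositive (m : set T -> R) : Prop :=
  forall A, measurable A -> 0 <= m A.

Definition atomless (m : set T -> R) : Prop :=
  forall A, measurable A -> 0 < m A ->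
    exists B, [/\ measurable B, B `<=` A, 0 < m B & m B < m A].

Definition tvnorm (m : set T -> R) : \bar R :=
  ereal_sup [set x : \bar R | exists n (F : 'I_n -> set T),
     [/\ forall i, measurable (F i),
         forall i j, i != j -> F i `&` F j = set0 &
         x = (\sum_(i < n) `|m (F i)|)%:E]].

(** Bounded (linear) operators on M(T). Values on non-signed-measures are
    irrelevant. *)
Definition bounded_op (Op : (set T -> R) -> (set T -> R)) : Prop :=
  [/\ forall m, smeasure m -> smeasure (Op m),
      forall (a : R) m n, smeasure m -> smeasure n ->
        Op (fun A => a * m A + n A) = (fun A => a * Op m A + Op n A) &
      exists C : R, forall m, smeasure m -> (tvnorm (Op m) <= C%:E * tvnorm m)%E].

Definition op_le (S Op : (set T -> R) -> (set T -> R)) : Prop :=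
  forall nu, smeasure nu -> spositive nu ->
    forall A, measurable A -> S nu A <= Op nu A.

Definition zero_op : (set T -> R) -> (set T -> R) := fun _ _ => 0.

Definition one_tensor (mu : set T -> R) : (set T -> R) -> (set T -> R) :=
  fun nu A => nu setT * mu A.

(** Weak continuity: given by a bounded transition kernel k,
    (Op nu)(A) = ∫ k(x,A) dnu(x).  The integral against the signed measure nu
    is computed through any decomposition nu = P - N with P, N finite
    positive measures. *)
Definition weakly_continuous (Op : (set T -> R) -> (set T -> R)) : Prop :=
  exists k : T -> set T -> R,
    [/\ forall x, smeasure (k x),
        forall A, measurable A -> measurable_fun setT (fun x => k x A),
        exists C : R, forall x, (tvnorm (k x) <= C%:E)%E &
        forall nu, smeasure nu ->
          forall P N : {finite_measure set T -> \bar R},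
            (forall A, measurable A -> nu A = fine (P A) - fine (N A)) ->
            forall A, measurable A ->
              Op nu A = Rintegral P setT (fun x => k x A)
                        - Rintegral N setT (fun x => k x A)].

End SignedMeasures.

From HB Require Import structures.
From mathcomp Require Import all_boot all_order all_algebra.
From mathcomp Require Import all_classical all_reals all_analysis.
From mathcomp Require Import lra ring.
Import Order.TTheory GRing.Theory Num.Theory.
Import numFieldNormedType.Exports.
Set Implicit Arguments. Unset Strict Implicit. Unset Printing Implicit Defensive.
Local Open Scope classical_set_scope.
Local Open Scope ring_scope.

(** The operator is [T nu := d(nu) mu], where [d(nu) = nu(Ω) - Σ_x nu{x}] is
    the mass of the diffuse part of [nu].  For positive [nu] one has
    [0 <= d(nu) <= nu(Ω)], so [0 <= T <= 1 ⊗ mu]; [d] is linear, and a Hahn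
    decomposition [Ω = P ∪ N] bounds the atomic sum, giving
    [|d(nu)| <= |nu P| + |nu N| <= ‖nu‖].  If [T] were given by a kernel [k],
    then [k(x, ·) = T δ_x = 0] because Dirac measures are purely atomic (points
    are Borel since Ω is metrizable); hence [T] would vanish on all positive
    measures, whereas [T m = m(Ω) mu ≠ 0] for the atomless [m]. *)

Section signed_measure.
Context {d : measure_display} {T : measurableType d} {R : realType}.
Implicit Types m : set T -> R.

Lemma smeasure_set0 m : smeasure m -> m set0 = 0.
Proof.
move=> [_ hm].
have := hm (fun=> set0) (fun=> measurable0) (@trivIset_set0 _ _ setT).
rewrite bigcup0 // => cvg_sum.
set u := (fun n : nat => \sum_(0 <= i < n) m set0) in cvg_sum.
have incr_u : (fun n => u n.+1 - u n) = fun=> m set0.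
  by apply/funext => n; rewrite /u big_nat_recr //= addrAC subrr add0r.
have : (fun n => u n.+1 - u n) @ \oo --> m set0 - m set0.
  by apply: cvgB => //; rewrite (cvg_shiftS u).
rewrite incr_u subrr => cvg0.
have cst : (fun=> m set0) @ (\oo : set_system nat) --> m set0 by exact: cvg_cst.
exact: cvg_unique cst cvg0.
Qed.

Lemma smeasure_semi_sigma_additive m :
  smeasure m -> semi_sigma_additive (fun A => (m A)%:E).
Proof.
move=> [_ hm] F mF tF _.
apply: cvg_EFin; first by apply: nearW => n; rewrite sumEFin.
have -> : fine \o (fun n => \sum_(0 <= i < n) (m (F i))%:E) =
          (fun n => \sum_(0 <= i < n) m (F i)).
  by apply/funext => n /=; rewrite sumEFin.
exact: hm.
Qed.

End signed_measure.

Section smeasure_charge.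
Context {d : measure_display} {T : measurableType d} {R : realType}.
Variables (m : set T -> R) (hm : smeasure m).

(* The unused proof argument keys the charge instance below on [hm]. *)
Definition smeasure_charge (_ : smeasure m) : set T -> \bar R := fun A => (m A)%:E.

Let smeasure_charge0 : smeasure_charge hm set0 = 0%E.
Proof. by rewrite /smeasure_charge smeasure_set0. Qed.

Let smeasure_charge_fin A : measurable A -> smeasure_charge hm A \is a fin_num.
Proof. by []. Qed.

Let smeasure_charge_sigma : semi_sigma_additive (smeasure_charge hm).
Proof. exact: smeasure_semi_sigma_additive. Qed.

HB.instance Definition _ := isCharge.Build _ _ _ (smeasure_charge hm)
  smeasure_charge0 smeasure_charge_fin smeasure_charge_sigma.

End smeasure_charge.

Section spositive_measure.
Context {d : measure_display} {T : measurableType d} {R : realType}.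
Variables (m : set T -> R) (hm : smeasure m) (hmp : spositive m).

Let smeasure_charge_ge0 A : (0 <= smeasure_charge hm A)%E.
Proof.
rewrite lee_fin; have [mA|mA] := pselect (measurable A); first exact: hmp.
by rewrite (proj1 hm).
Qed.

Definition spositive_measure := measure_of_charge _ smeasure_charge_ge0.

HB.instance Definition _ := Measure.on spositive_measure.

Let spositive_measure_fin : fin_num_fun spositive_measure.
Proof. by move=> A mA; rewrite fin_num_measure. Qed.

HB.instance Definition _ :=
  @Measure_isFinite.Build _ _ _ spositive_measure spositive_measure_fin.

Lemma spositive_measureE A : spositive_measure A = (m A)%:E.
Proof. by []. Qed.

End spositive_measure.

Section fine_measure.
Context {d : measure_display} {T : measurableType d} {R : realType}.
Variable P : {finite_measure set T -> \bar R}.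

Definition fine_measure : set T -> R :=
  fun A => if pselect (measurable A) then fine (P A) else 0.

Lemma fine_measureE A : measurable A -> fine_measure A = fine (P A).
Proof. by move=> mA; rewrite /fine_measure; case: pselect. Qed.

Lemma smeasure_fine_measure : smeasure fine_measure.
Proof.
split=> [A nA|F mF tF]; first by rewrite /fine_measure; case: pselect.
have mUF : measurable (\bigcup_n F n) by exact: bigcupT_measurable.
have finP A : measurable A -> P A \is a fin_num by move=> mA; rewrite fin_num_measure.
have cvgP : (fun n => \sum_(0 <= i < n) P (F i))%E @ \oo -->
             (fine (P (\bigcup_n F n)))%:E.
  by rewrite fineK ?finP //; exact: measure_semi_sigma_additive.
have [_ cvg_fine] := (fine_cvgP _ _).1 cvgP.
rewrite fine_measureE //.
suff -> : (fun n => \sum_(0 <= i < n) fine_measure (F i)) =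
          fine \o (fun n => \sum_(0 <= i < n) P (F i))%E by exact: cvg_fine.
apply/funext => n /=.
rewrite (eq_bigr (fun i => (fine (P (F i)))%:E)) => [|i _]; last first.
  by rewrite fineK // finP.
by rewrite sumEFin /=; apply: eq_bigr => i _; exact: fine_measureE.
Qed.

End fine_measure.

Lemma ge0_fin_num_le {R : realDomainType} (x y : \bar R) :
  (0 <= x)%E -> (x <= y)%E -> y \is a fin_num -> x \is a fin_num.
Proof.
move=> x0 xy fy; rewrite ge0_fin_numE //; apply: le_lt_trans xy _.
by rewrite ltey_eq fy.
Qed.

Lemma maxr0_subN {R : realDomainType} (x : R) : Num.max x 0 - Num.max (- x) 0 = x.
Proof.
have [x0|x0] := leP 0 x.
  by rewrite max_r ?subr0 // oppr_le0.
by rewrite max_l ?sub0r ?opprK // oppr_ge0 ltW.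
Qed.

Lemma esum_EFinZl {T : choiceType} {R : realType} (D : set T) (c : R) (g : T -> R) :
  0 <= c -> \esum_(x in D) (c * g x)%:E = (c%:E * \esum_(x in D) (g x)%:E)%E.
Proof.
move=> c0; rewrite /esum -ereal_supZl //; last first.
  by apply/set0P; exists 0%E, set0; [exact: fsets_set0 | rewrite fsbig_set0].
rewrite image_comp; congr ereal_sup; apply: eq_imagel => A [fA _] /=.
by rewrite !fsumEFin // -EFinM mulr_fsumr.
Qed.

Section signed_sum.
Context {T : choiceType} {R : realType}.
Implicit Types f g : T -> R.

Definition pos_sum f : \bar R := \esum_(x in [set: T]) (Num.max (f x) 0)%:E.

Definition signed_summable f :=
  pos_sum f \is a fin_num /\ pos_sum (fun x => - f x) \is a fin_num.

(* The unordered sum of [f]; it is meaningful only for [signed_summable f],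
   since [fine] sends an infinite part to [0]. *)
Definition signed_sum f : R :=
  fine (pos_sum f) - fine (pos_sum (fun x => - f x)).

Lemma pos_sum_ge0 f : (0 <= pos_sum f)%E.
Proof. by apply: esum_ge0 => x _; rewrite lee_fin le_max lexx orbT. Qed.

Lemma pos_sum_ge f x : ((Num.max (f x) 0)%:E <= pos_sum f)%E.
Proof.
apply: esum_ge; exists [set x]; last by rewrite fsbig_set1.
by split => //; exact: finite_set1.
Qed.

Lemma pos_sum_eq0 f : (forall x, f x <= 0) -> pos_sum f = 0%E.
Proof. by move=> f_le0; apply: esum1 => x _; rewrite max_r. Qed.

Lemma pos_sumZ c f : 0 <= c -> pos_sum (fun x => c * f x) = (c%:E * pos_sum f)%E.
Proof.
move=> c0; rewrite /pos_sum -esum_EFinZl //; apply: eq_esum => x _.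
by rewrite maxr_pMr // mulr0.
Qed.

Lemma pos_sumD_le f g :
  (pos_sum (fun x => f x + g x)%R <= pos_sum f + pos_sum g)%E.
Proof.
rewrite /pos_sum -esumD => [|x _|x _]; rewrite ?lee_fin ?le_max ?lexx ?orbT //.
apply: le_esum => x _; rewrite -EFinD lee_fin ge_max; apply/andP; split.
  by apply: lerD; rewrite le_max lexx.
by apply: addr_ge0; rewrite le_max lexx orbT.
Qed.

Lemma signed_summableD f g : signed_summable f -> signed_summable g ->
  signed_summable (fun x => f x + g x).
Proof.
move=> [ff fNf] [fg fNg]; split.
  apply: ge0_fin_num_le (pos_sum_ge0 _) (pos_sumD_le f g) _.
  by rewrite fin_numD ff fg.
apply: ge0_fin_num_le (pos_sum_ge0 _) _ (_ : pos_sum _ + pos_sum _ \is a fin_num).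
- under eq_fun do rewrite opprD; exact: pos_sumD_le.
- by rewrite fin_numD fNf fNg.
Qed.

Lemma signed_sumD f g : signed_summable f -> signed_summable g ->
  signed_sum (fun x => f x + g x) = signed_sum f + signed_sum g.
Proof.
move=> [ff fNf] [fg fNg].
have [ffg fNfg] := signed_summableD (conj ff fNf) (conj fg fNg).
(* [(f + g)^+ - (f + g)^- = (f^+ + g^+) - (f^- + g^-)], without subtraction in [\bar R]. *)
have : (pos_sum (fun x => f x + g x)%R + pos_sum (fun x => - f x)%R
        + pos_sum (fun x => - g x)%R =
        pos_sum (fun x => - (f x + g x))%R + pos_sum f + pos_sum g)%E.
  have max0_ge0 (y : R) : (0 <= (Num.max y 0)%:E)%E.
    by rewrite lee_fin le_max lexx orbT.
  rewrite /pos_sum -!esumD; try by move=> *; rewrite ?adde_ge0.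
  apply: eq_esum => x _; rewrite -!EFinD; congr EFin.
  have := maxr0_subN (f x + g x); have := maxr0_subN (f x); have := maxr0_subN (g x).
  rewrite opprD; lra.
rewrite -(fineK ffg) -(fineK fNfg) -(fineK ff) -(fineK fNf) -(fineK fg) -(fineK fNg).
by rewrite -!EFinD => -[]; rewrite /signed_sum; lra.
Qed.

Lemma pos_sumNN f : pos_sum (fun x => - - f x) = pos_sum f.
Proof. by apply: eq_esum => x _; rewrite opprK. Qed.

Lemma signed_summableN f : signed_summable f -> signed_summable (fun x => - f x).
Proof. by rewrite /signed_summable pos_sumNN => -[]. Qed.

Lemma signed_sumN f : signed_sum (fun x => - f x) = - signed_sum f.
Proof. by rewrite /signed_sum pos_sumNN opprB. Qed.

Let mulrN_fun c f : (fun x => - (c * f x)) = (fun x => c * - f x).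
Proof. by apply/funext => x; rewrite mulrN. Qed.

Let mulrNN_fun c f : (fun x => c * f x) = (fun x => - c * - f x).
Proof. by apply/funext => x; rewrite mulrNN. Qed.

Lemma signed_summableZ c f : signed_summable f ->
  signed_summable (fun x => c * f x).
Proof.
wlog c0 : c f / 0 <= c => [hwlog sf|[ff fNf]].
  have [c0|c0] := leP 0 c; first exact: hwlog.
  rewrite mulrNN_fun; apply: hwlog; last exact: signed_summableN.
  by rewrite oppr_ge0 ltW.
by rewrite /signed_summable mulrN_fun !pos_sumZ // !fin_numM.
Qed.

Lemma signed_sumZ c f : signed_summable f ->
  signed_sum (fun x => c * f x) = c * signed_sum f.
Proof.
wlog c0 : c f / 0 <= c => [hwlog sf|[ff fNf]].
  have [c0|c0] := leP 0 c; first exact: hwlog.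
  rewrite mulrNN_fun hwlog ?signed_sumN ?mulrNN //; last exact: signed_summableN.
  by rewrite oppr_ge0 ltW.
rewrite /signed_sum mulrN_fun !pos_sumZ //.
by rewrite -(fineK ff) -(fineK fNf) -!EFinM /= mulrBr.
Qed.

End signed_sum.

Section atoms.
Context {d : measure_display} {T : measurableType d} {R : realType}.
Hypothesis measurable_set1 : forall x : T, measurable [set x].
Implicit Types m nu : set T -> R.

Lemma esum_set1_le_measure (mu : {measure set T -> \bar R}) (D : set T) :
  measurable D -> (\esum_(x in D) mu [set x] <= mu D)%E.
Proof.
move=> mD; apply: ge_ereal_sup => _ [A [fA AD] <-].
rewrite -measure_fin_bigcup //; last by move=> i j _ _ [z [/= -> ->]].
apply: le_measure; rewrite ?inE //; first exact: fin_bigcup_measurable.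
by move=> z [x Ax /= ->]; exact: AD.
Qed.

Section hahn.
Variables (nu : {charge set T -> \bar R}) (P N : set T).
Variable nuPN : hahn_decomposition nu P N.

Lemma jordan_pos_set1 x : jordan_pos nuPN [set x] = maxe (nu [set x]) 0%E.
Proof.
have [[mP posP] [mN negP] PNT _] := nuPN.
rewrite jordan_posE cjordan_posE /crestr0 ifT ?inE // /crestr set1I.
have [Px|nPx] := pselect (P x).
  rewrite mem_set // max_l //; apply: posP => // y ->; exact: Px.
have Nx : N x by have : [set: T] x by []; rewrite -PNT => -[].
rewrite memNset // charge0 max_r //; apply: negP => // y ->; exact: Nx.
Qed.

Lemma jordan_neg_set1 x : jordan_neg nuPN [set x] = maxe (- nu [set x])%E 0%E.
Proof.
have [[mP posP] [mN negP] PNT _] := nuPN.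
rewrite jordan_negE cjordan_negE /crestr0 ifT ?inE // /crestr set1I.
have [Nx|nNx] := pselect (N x).
  rewrite mem_set // max_l // oppe_ge0; apply: negP => // y ->; exact: Nx.
have Px : P x by have : [set: T] x by []; rewrite -PNT => -[].
rewrite memNset // charge0 oppe0 max_r // oppe_le0.
by apply: posP => // y ->; exact: Px.
Qed.

End hahn.

Lemma smeasure_hahn_atoms (nu : set T -> R) : smeasure nu -> exists P N : set T,
  [/\ measurable P, measurable N, P `&` N = set0, nu setT = nu P + nu N &
      (pos_sum (fun x => nu [set x]) <= (nu P)%:E)%E /\
      (pos_sum (fun x => - nu [set x])%R <= (- nu N)%:E)%E].
Proof.
move=> hnu; have [P [N nuPN]] := Hahn_decomposition (smeasure_charge hnu).
have [[mP _] [mN _] PNT PN0] := nuPN.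
exists P, N; split => //.
  have := charge_partition (smeasure_charge hnu) measurableT mP mN PNT PN0.
  by rewrite /smeasure_charge !setTI => -[].
split.
- have <- : jordan_pos nuPN setT = (nu P)%:E.
    by rewrite jordan_posE cjordan_posE /crestr0 ifT ?inE // /crestr setTI.
  rewrite (_ : pos_sum _ = \esum_(x in setT) jordan_pos nuPN [set x]).
    exact: esum_set1_le_measure.
  by apply: eq_esum => x _; rewrite jordan_pos_set1 EFin_max.
- have <- : jordan_neg nuPN setT = (- nu N)%:E.
    by rewrite jordan_negE cjordan_negE /crestr0 ifT ?inE // /crestr setTI.
  rewrite (_ : pos_sum _ = \esum_(x in setT) jordan_neg nuPN [set x]).
    exact: esum_set1_le_measure.
  by apply: eq_esum => x _; rewrite jordan_neg_set1 EFin_max.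
Qed.

Definition atomic_mass nu : R := signed_sum (fun x => nu [set x]).

Definition diffuse_mass nu : R := nu setT - atomic_mass nu.

Lemma signed_summable_atoms nu : smeasure nu -> signed_summable (fun x => nu [set x]).
Proof.
move=> hnu; have [P [N [_ _ _ _ [leP leN]]]] := smeasure_hahn_atoms hnu.
by split; [apply: ge0_fin_num_le (pos_sum_ge0 _) leP _ |
           apply: ge0_fin_num_le (pos_sum_ge0 _) leN _].
Qed.

Lemma smeasure_hahn_atomic_mass nu : smeasure nu -> exists P N : set T,
  [/\ measurable P, measurable N, P `&` N = set0, nu setT = nu P + nu N &
      exists a b, [/\ 0 <= a <= nu P, 0 <= b <= - nu N & atomic_mass nu = a - b]].
Proof.
move=> hnu; have [P [N [mP mN PN0 nuT [leP leN]]]] := smeasure_hahn_atoms hnu.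
have [fP fN] := signed_summable_atoms hnu.
exists P, N; split => //.
exists (fine (pos_sum (fun x => nu [set x]))), (fine (pos_sum (fun x => - nu [set x]))).
by split => //; rewrite fine_ge0 ?pos_sum_ge0 //= -lee_fin fineK.
Qed.

Lemma diffuse_mass_bound nu : smeasure nu -> exists P N : set T,
  [/\ measurable P, measurable N, P `&` N = set0 &
      `|diffuse_mass nu| <= `|nu P| + `|nu N|].
Proof.
move=> hnu; have [P [N [mP mN PN0 nuT [a [b [/andP[a0 aP] /andP[b0 bN] Eat]]]]]] :=
  smeasure_hahn_atomic_mass hnu.
exists P, N; split => //; rewrite /diffuse_mass Eat nuT.
rewrite (ger0_norm (le_trans a0 aP)) (ler0_norm (_ : nu N <= 0)); last lra.
by rewrite ler_norml; apply/andP; split; lra.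
Qed.

Lemma diffuse_mass_itv nu : smeasure nu -> spositive nu ->
  0 <= diffuse_mass nu <= nu setT.
Proof.
move=> hnu pnu; have [P [N [_ mN _ nuT [a [b [/andP[a0 aP] /andP[b0 bN] Eat]]]]]] :=
  smeasure_hahn_atomic_mass hnu.
have := pnu N mN; rewrite /diffuse_mass Eat nuT => N0.
by apply/andP; split; lra.
Qed.

Lemma diffuse_mass_linear (a : R) m n : smeasure m -> smeasure n ->
  diffuse_mass (fun A => a * m A + n A) = a * diffuse_mass m + diffuse_mass n.
Proof.
move=> hm hn; rewrite /diffuse_mass /atomic_mass.
rewrite (signed_sumD (signed_summableZ a (signed_summable_atoms hm))
                     (signed_summable_atoms hn)).
by rewrite (signed_sumZ _ (signed_summable_atoms hm)); ring.
Qed.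

Lemma atomless_set1 m x : smeasure m -> spositive m -> atomless m -> m [set x] = 0.
Proof.
move=> hm pm am; apply/eqP; rewrite eq_le pm // andbT leNgt; apply/negP => mx0.
have [B [mB /subset_set1[->|->] B0 Bx]] := am _ (measurable_set1 x) mx0.
  by move: B0; rewrite smeasure_set0 ?ltxx.
by move: Bx; rewrite ltxx.
Qed.

Lemma diffuse_mass_atomless m : smeasure m -> spositive m -> atomless m ->
  diffuse_mass m = m setT.
Proof.
move=> hm pm am; rewrite /diffuse_mass /atomic_mass /signed_sum.
by rewrite !pos_sum_eq0 ?subr0 // => x; rewrite atomless_set1 ?oppr0.
Qed.

Lemma diffuse_mass_dirac (x : T) :
  diffuse_mass (fine_measure (\d_x : {finite_measure set T -> \bar R})) = 0.
Proof.
set dx := fine_measure _.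
have hdx : smeasure dx by exact: smeasure_fine_measure.
have pdx : spositive dx by move=> A mA; rewrite /dx fine_measureE // fine_ge0.
have dx1 y : dx [set y] = (x \in [set y])%:R by rewrite /dx fine_measureE.
have [fx _] := signed_summable_atoms hdx.
have atoms_ge1 : 1 <= fine (pos_sum (fun y => dx [set y])).
  by rewrite -lee_fin fineK // (le_trans _ (pos_sum_ge _ x)) // dx1 mem_set // max_l.
have /andP[s0 _] := diffuse_mass_itv hdx pdx.
apply/eqP; rewrite eq_le s0 andbT.
move: atoms_ge1; rewrite /diffuse_mass /atomic_mass /signed_sum.
rewrite (pos_sum_eq0 (f := fun y => - dx [set y])) => [|y]; last first.
  by rewrite oppr_le0 pdx.
by rewrite /dx fine_measureE //= indicE in_setT subr0 subr_le0.
Qed.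

End atoms.

Section total_variation.
Context {d : measure_display} {T : measurableType d} {R : realType}.

Lemma tvnorm_ge_disjoint (nu : set T -> R) P N :
  measurable P -> measurable N -> P `&` N = set0 ->
  ((`|nu P| + `|nu N|)%:E <= tvnorm nu)%E.
Proof.
move=> mP mN PN; apply: ereal_sup_ubound.
exists 2%N, (fun i : 'I_2 => if i == ord0 then P else N); split.
- by move=> i; case: ifP.
- by case=> [[|[|?]] ?] [[|[|?]] ?] //= _; rewrite setIC.
- by rewrite !big_ord_recr big_ord0 /= add0r.
Qed.

Lemma tvnorm_scale_spositive (mu : set T -> R) (c : R) :
  smeasure mu -> spositive mu ->
  (tvnorm (fun A => c * mu A)%R <= (`|c| * mu setT)%:E)%E.
Proof.
move=> hmu pmu; apply: ge_ereal_sup => _ [n [F [mF dF ->]]]; rewrite lee_fin.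
have -> : \sum_(i < n) `|c * mu (F i)| = `|c| * \sum_(i < n) mu (F i).
  by rewrite mulr_sumr; apply: eq_bigr => i _; rewrite normrM (ger0_norm (pmu _ (mF i))).
apply: ler_wpM2l => //; rewrite -lee_fin -sumEFin.
have tF : trivIset setT F.
  move=> i j _ _ [z [Fi Fj]]; apply/eqP/negPn/negP => ij.
  by have := dF i j ij => /seteqP[+ _] => /(_ z (conj Fi Fj)).
rewrite -(spositive_measureE hmu pmu).
rewrite [X in (X <= _)%E](_ : _ = \sum_(i < n) spositive_measure hmu pmu (F i)) //.
rewrite -measure_semi_additive_ord //; last exact: bigsetU_measurable.
by apply: le_measure; rewrite ?inE //; exact: bigsetU_measurable.
Qed.

End total_variation.

Section weak_continuity.
Context {d : measure_display} {T : measurableType d} {R : realType}.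

Lemma one_tensor_weakly_continuous (mu : set T -> R) :
  smeasure mu -> spositive mu -> weakly_continuous (one_tensor mu).
Proof.
move=> hmu pmu; exists (fun _ => mu); split => //.
- exists (mu setT) => x; have := tvnorm_scale_spositive 1 hmu pmu.
  by rewrite normr1 !mul1r; under eq_fun do rewrite mul1r.
- move=> nu _ P N nuPN A mA.
  by rewrite /one_tensor nuPN // !Rintegral_cst //= mulrBl !(mulrC (mu A)).
Qed.

(* The kernel of a weakly continuous operator is read off at Dirac measures,
   [k x A = Op \d_x A], and then integrated against [nu]. *)
Lemma weakly_continuous_dirac_eq0 (Op : (set T -> R) -> (set T -> R)) :
  weakly_continuous Op ->
  (forall x A, measurable A ->
     Op (fine_measure (\d_x : {finite_measure set T -> \bar R})) A = 0) ->
  forall nu, smeasure nu -> spositive nu ->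
  forall A, measurable A -> Op nu A = 0.
Proof.
move=> [k [_ kmeas _ rep]] Op_dirac nu hnu pnu A mA.
have kA0 : (fun x => k x A) = fun=> 0.
  apply/funext => x.
  have dxE B : measurable B -> fine_measure \d_x B =
      fine ((\d_x : {finite_measure set T -> \bar R}) B) - fine (@mzero _ _ R B).
    by move=> mB; rewrite fine_measureE // subr0.
  have := rep _ (smeasure_fine_measure _) _ _ dxE A mA.
  rewrite Op_dirac // /Rintegral integral_measure_zero integral_dirac //.
    by rewrite diracT mul1e /= subr0.
  by apply/measurable_realfun.measurable_EFinP; exact: kmeas.
have nuE B : measurable B ->
    nu B = fine (spositive_measure hnu pnu B) - fine (@mzero _ _ R B).
  by move=> mB; rewrite spositive_measureE /= subr0.
by rewrite (rep _ hnu _ _ nuE A mA) kA0 !Rintegral_cst //= !mul0r subr0.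
Qed.

End weak_continuity.

Section diffuse_operator.
Context {d : measure_display} {T : measurableType d} {R : realType}.
Hypothesis measurable_set1 : forall x : T, measurable [set x].
Variable mu : set T -> R.
Hypotheses (hmu : smeasure mu) (pmu : spositive mu).

Definition diffuse_op (nu : set T -> R) : set T -> R :=
  fun A => diffuse_mass nu * mu A.

Lemma smeasure_diffuse_op nu : smeasure (diffuse_op nu).
Proof.
split=> [A nA|F mF tF]; first by rewrite /diffuse_op (proj1 hmu A nA) mulr0.
rewrite /diffuse_op; under eq_fun do rewrite -mulr_sumr.
by apply: cvgM; [exact: cvg_cst | exact: (proj2 hmu)].
Qed.

Lemma bounded_op_diffuse_op : bounded_op diffuse_op.
Proof.
split => [nu _|a m n hm hn|]; first exact: smeasure_diffuse_op.
  apply/funext => A; rewrite /diffuse_op diffuse_mass_linear //; ring.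
exists (mu setT) => nu hnu.
have [P [N [mP mN PN0 nu_bound]]] := diffuse_mass_bound measurable_set1 hnu.
have muT0 := pmu measurableT.
apply: le_trans (tvnorm_scale_spositive _ hmu pmu) _.
apply: le_trans (lee_wpmul2l _ (tvnorm_ge_disjoint nu mP mN PN0)); last first.
  by rewrite lee_fin.
by rewrite -EFinM lee_fin mulrC ler_wpM2l.
Qed.

Lemma diffuse_op_ge0 : op_le zero_op diffuse_op.
Proof.
move=> nu hnu pnu A mA; rewrite /zero_op /diffuse_op mulr_ge0 ?pmu //.
by have /andP[] := diffuse_mass_itv measurable_set1 hnu pnu.
Qed.

Lemma diffuse_op_le_one_tensor : op_le diffuse_op (one_tensor mu).
Proof.
move=> nu hnu pnu A mA; rewrite /diffuse_op /one_tensor ler_wpM2r ?pmu //.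
by have /andP[] := diffuse_mass_itv measurable_set1 hnu pnu.
Qed.

Lemma diffuse_op_not_weakly_continuous :
  (exists m : set T -> R, [/\ smeasure m, spositive m, m setT <> 0 & atomless m]) ->
  mu <> (fun=> 0) -> ~ weakly_continuous diffuse_op.
Proof.
move=> [m [hm pm m0 am]] mu0 wc.
have [A muA] : exists A, mu A <> 0.
  by apply/existsNP => mu_eq0; exact/mu0/funext.
have mA : measurable A by apply: contrapT => nA; exact: muA (proj1 hmu A nA).
have dirac0 x B : measurable B ->
    diffuse_op (fine_measure (\d_x : {finite_measure set T -> \bar R})) B = 0.
  by move=> _; rewrite /diffuse_op diffuse_mass_dirac // mul0r.
have /eqP := weakly_continuous_dirac_eq0 wc dirac0 hm pm mA.
by rewrite /diffuse_op diffuse_mass_atomless // mulf_eq0 => /orP[]/eqP.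
Qed.

End diffuse_operator.

Lemma polish_measurable_set1 (R : realType) (X : ptopologicalType) :
  polish R X -> forall x : Borel X, measurable [set x].
Proof.
move=> [_ [dist [dist_ge0 [dist_eq0 [_ [_ [dist_open _]]]]]]] x.
have : open (~` [set x] : set X).
  apply/dist_open => y /= yx; exists (dist y x).
    by rewrite lt_neqAle dist_ge0 andbT eq_sym; apply/eqP => /dist_eq0.
  by move=> z /= + zx; rewrite zx ltxx.
by move=> oCx; rewrite -(setCK [set x]); apply: measurableC; exact: sub_sigma_algebra.
Qed.

Theorem mainTheorem6 (R : realType) (X : ptopologicalType) :
  polish R X ->
  (exists m : set (Borel X) -> R,
      [/\ smeasure m, spositive m, m setT <> 0 & atomless m]) ->
  forall mu : set (Borel X) -> R,
    smeasure mu -> spositive mu -> mu <> (fun _ => 0) ->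
    weakly_continuous (one_tensor mu) /\
    exists Op : (set (Borel X) -> R) -> (set (Borel X) -> R),
      [/\ bounded_op Op, op_le zero_op Op, op_le Op (one_tensor mu)
        & ~ weakly_continuous Op].
Proof.
move=> polX atomless_ex mu hmu pmu mu0.
have set1X := polish_measurable_set1 polX.
split; first exact: one_tensor_weakly_continuous.
exists (diffuse_op mu); split.
- exact: bounded_op_diffuse_op.
- exact: diffuse_op_ge0.
- exact: diffuse_op_le_one_tensor.
- exact: diffuse_op_not_weakly_continuous.
Qed.
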